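(* Let $m_1,m_2\ge 1$ be integers and let $s_1,s_2\in\{+1,-1\}$. Let $$|\mathscr{G}_1\rangle=\tfrac{1}{\sqrt2}\Big(|0\rangle\textstyle\bigotimes_{k=2}^{2m_1}|i^1_k\rangle+s_1\,|1\rangle\bigotimes_{k=2}^{2m_1}|\bar i^1_k\rangle\Big),\qquad |\mathscr{G}_2\rangle=\tfrac{1}{\sqrt2}\Big(|0\rangle\textstyle\bigotimes_{k=2}^{2m_2}|i^2_k\rangle+s_2\,|1\rangle\bigotimes_{k=2}^{2m_2}|\bar i^2_k\rangle\Big)$$ be a $2m_1$-qubit and a $2m_2$-qubit state, with all $i^h_k\in\{0,1\}$, and consider the product state $|\mathscr{G}_1\rangle\otimes|\mathscr{G}_2\rangle$. Call ''part 1'' and ''part 2'' the first $m_1$ and the last $m_1$ qubits of $|\mathscr{G}_1\rangle$, and ''part 3'' and ''part 4'' the first $m_2$ and the last $m_2$ qubits of $|\mathscr{G}_2\rangle$. Perform a projective measurement in the GHZ basis (the Bell basis when $m_1=m_2=1$) on the $(m_1+m_2)$-qubit register formed by parts 1 and 3 (ordered: part 1 then part 3), or alternatively on the register formed by parts 1 and 4 (ordered: part 1 then part 4). Let $|\mathcal{G}_a\rangle$ denote the obtained measurement outcome (a GHZ basis state) and $|\mathcal{G}_b\rangle$ the state into which the remaining $m_1+m_2$ qubits (parts 2 and 4 in the first case, ordered part 2 then part 4; parts 2 and 3 in the second case, ordered part 2 then part 3) collapse. Suppose the following two conditions hold: (1) either for both $h=1,2$ the string $0i^h_2i^h_3\cdots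 i^h_{m_h}$ equals $i^h_{m_h+1}i^h_{m_h+2}\cdots i^h_{2m_h}$, or for both $h=1,2$ the string $0i^h_2i^h_3\cdots i^h_{m_h}$ equals $\bar i^h_{m_h+1}\bar i^h_{m_h+2}\cdots \bar i^h_{2m_h}$; (2) $s_1=s_2$ (both states carry the same sign in front of their second term). Then $|\mathcal{G}_a\rangle$ and $|\mathcal{G}_b\rangle$ are the same state (for every measurement outcome); otherwise (if the conditions fail) they are different.
   Context: Qubits have computational basis $|0\rangle,|1\rangle$; for a bit $b$, $\bar b=1-b$ denotes its negation. For $N\ge 2$ qubits, the GHZ basis is the orthonormal basis of $N$-qubit states $\frac{1}{\sqrt2}\big(|0\,b_2b_3\cdots b_N\rangle\pm|1\,\bar b_2\bar b_3\cdots\bar b_N\rangle\big)$, $b_2,\dots,b_N\in\{0,1\}$; for $N=2$ these are the four Bell states $\frac1{\sqrt2}(|00\rangle\pm|11\rangle)$, $\frac1{\sqrt2}(|01\rangle\pm|10\rangle)$, and the measurement is then called a Bell measurement. ''Same state'' means equal as quantum states (up to a global phase). *)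

From mathcomp Require Import all_boot all_order all_algebra all_field.
Set Implicit Arguments. Unset Strict Implicit. Unset Printing Implicit Defensive.
Import Order.TTheory GRing.Theory Num.Theory.
Local Open Scope ring_scope.

(* computational basis labels of an n-qubit register: bit strings of length n *)
Notation bits n := {ffun 'I_n -> bool}.

(* (unnormalized) state vectors of an n-qubit register: amplitude functions *)
Notation qvec n := {ffun bits n -> algC}.

Definition ket n (x : bits n) : qvec n := [ffun y => (y == x)%:R].

Definition negb_bits n (x : bits n) : bits n := [ffun k => ~~ x k].

Definition join m n (a : bits m) (b : bits n) : bits (m + n) :=
  [ffun k => match split k with inl i => a i | inr j => b j end].
Definition lbits m n (z : bits (m + n)) : bits m := [ffun i => z (lshift n i)].
Definition rbits m n (z : bits (m + n)) : bits n := [ffun j => z (rshift m j)].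

Definition tensor m n (u : qvec m) (v : qvec n) : qvec (m + n) :=
  [ffun z => u (lbits z) * v (rbits z)].

Definition scv n (c : algC) (v : qvec n) : qvec n := [ffun y => c * v y].

Definition first0 n (x : bits n) : Prop := forall k : 'I_n, val k = 0%N -> x k = false.

Definition ghz n (x : bits n) (s : algC) : qvec n :=
  scv (sqrtC 2)^-1 (ket x + scv s (ket (negb_bits x))).

Definition in_ghz_basis n (v : qvec n) : Prop :=
  exists (x : bits n) (s : algC), first0 x /\ (s = 1 \/ s = -1) /\ v = ghz x s.

Definition qnorm n (v : qvec n) : algC := sqrtC (\sum_y `|v y| ^+ 2).
Definition normalize n (v : qvec n) : qvec n := scv (qnorm v)^-1 v.

(* equal as quantum states: equal up to a global phase *)
Definition same_state n (u v : qvec n) : Prop :=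
  exists c : algC, `|c| = 1 /\ u = scv c v.

(* unnormalized post-measurement state of register B after projecting register A
   (joint amplitude psi x y, x on A, y on B) onto the state a *)
Definition collapse p q (psi : bits p -> bits q -> algC) (a : qvec p) : qvec q :=
  [ffun y => \sum_x (a x)^* * psi x y].

(* amplitude of |G1> (x) |G2> (2 m1 + 2 m2 qubits), rearranged as
   register A = parts 1,3 (x) and register B = parts 2,4 (y) if parts13,
   register A = parts 1,4 (x) and register B = parts 2,3 (y) otherwise. *)
Definition joint_amp m1 m2 (G1 : qvec (m1 + m1)) (G2 : qvec (m2 + m2)) (parts13 : bool)
  (x : bits (m1 + m2)) (y : bits (m1 + m2)) : algC :=
  if parts13 then
    tensor G1 G2 (join (join (lbits x) (lbits y)) (join (rbits x) (rbits y)))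
  else
    tensor G1 G2 (join (join (lbits x) (lbits y)) (join (rbits y) (rbits x))).

From mathcomp Require Import all_boot all_order all_algebra all_field ring.
Import Order.TTheory GRing.Theory Num.Theory.
Local Open Scope ring_scope.
Set Implicit Arguments. Unset Strict Implicit.

(* Write |G1> and |G2> as GHZ vectors on the strings (a, b) and (u, v), where a, b
   (resp. u, v) are the halves of i1 (resp. i2), and the outcome as a GHZ vector on
   (c, d).  Projecting the measured register onto it keeps, in each factor, only the
   branch whose measured half matches, so the collapse vanishes unless c is a or its
   complement and d is u or its complement.  As a GHZ vector on the complemented
   string is the same vector times its sign, one may assume c = a and d = u; the
   other qubits then collapse to a multiple of the GHZ vector on (b, v) with sign
   s s1 s2.  Two GHZ vectors are the same state iff their strings agree up to
   complement and their signs agree: here iff (b, v) is (a, u) or its complement and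
   s1 = s2.  Measuring parts 1 and 4 only exchanges u and v, which leaves this
   condition unchanged.  The convention that GHZ strings start with 0 plays no role. *)

Definition is_sign (s : algC) : Prop := s = 1 \/ s = -1.

Section Sign.
Variable s : algC.
Hypothesis hs : is_sign s.

Lemma sign_real : s \is Num.real.
Proof. by case: hs => ->; rewrite ?rpredN real1. Qed.

Lemma sign_mulss : s * s = 1.
Proof. by case: hs => ->; rewrite ?mulrNN mulr1. Qed.

Lemma sign_norm : `|s| = 1.
Proof. by case: hs => ->; rewrite ?normrN normr1. Qed.

Lemma sign_neq0 : s != 0.
Proof. by rewrite -normr_eq0 sign_norm oner_eq0. Qed.

End Sign.

Lemma sign_mul s t : is_sign s -> is_sign t -> is_sign (s * t).
Proof. by case=> ->; case=> ->; rewrite ?mulr1 ?mulrN1 ?opprK; [left|right|right|left]. Qed.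

Lemma sign_eq_mulr2 s t u : is_sign s -> is_sign u -> s = s * t * u <-> t = u.
Proof.
move=> hs hu; split=> [|->]; last by rewrite -mulrA sign_mulss // mulr1.
move/(congr1 ( *%R s)); rewrite !mulrA sign_mulss // mul1r => /esym htu.
by rewrite -[t]mulr1 -(sign_mulss hu) mulrA htu mul1r.
Qed.

Section Bits.
Variables m n : nat.

Lemma negb_bitsK : involutive (@negb_bits n).
Proof. by move=> x; apply/ffunP=> k; rewrite !ffunE negbK. Qed.

Lemma negb_bits_inj : injective (@negb_bits n).
Proof. exact: inv_inj negb_bitsK. Qed.

Lemma negb_bits_eq (p q : bits n) : (negb_bits p == q) = (p == negb_bits q).
Proof. by apply/eqP/eqP=> [<-|->]; rewrite negb_bitsK. Qed.

Lemma negb_bits_neq (hn : (0 < n)%N) (x : bits n) : (x == negb_bits x) = false.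
Proof. by apply/negbTE/eqP=> /ffunP/(_ (Ordinal hn)); rewrite ffunE; case: (x _). Qed.

Lemma lbits_join (p : bits m) (q : bits n) : lbits (join p q) = p.
Proof. by apply/ffunP=> i; rewrite !ffunE (unsplitK (inl i)). Qed.

Lemma rbits_join (p : bits m) (q : bits n) : rbits (join p q) = q.
Proof. by apply/ffunP=> j; rewrite !ffunE (unsplitK (inr j)). Qed.

Lemma joinK (z : bits (m + n)) : join (lbits z) (rbits z) = z.
Proof. by apply/ffunP=> k; rewrite !ffunE -{2}(splitK k); case: split => j; rewrite ffunE. Qed.

Lemma join_eq (p p' : bits m) (q q' : bits n) :
  (join p q == join p' q') = (p == p') && (q == q').
Proof.
apply/eqP/andP=> [e|[/eqP-> /eqP->]] //.
by split; [rewrite -(lbits_join p q) e lbits_join | rewrite -(rbits_join p q) e rbits_join].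
Qed.

Lemma negb_join (p : bits m) (q : bits n) :
  negb_bits (join p q) = join (negb_bits p) (negb_bits q).
Proof. by apply/ffunP=> k; rewrite !ffunE; case: split => j; rewrite ffunE. Qed.

End Bits.

Lemma scvE n c (v : qvec n) y : scv c v y = c * v y.
Proof. by rewrite ffunE. Qed.

Lemma scvA n a b (v : qvec n) : scv a (scv b v) = scv (a * b) v.
Proof. by apply/ffunP=> y; rewrite !scvE mulrA. Qed.

Lemma scv1 n (v : qvec n) : scv 1 v = v.
Proof. by apply/ffunP=> y; rewrite scvE mul1r. Qed.

Lemma scvr0 n c : scv c (0 : qvec n) = 0.
Proof. by apply/ffunP=> y; rewrite scvE !ffunE mulr0. Qed.

Lemma qnorm_scv n c (v : qvec n) : qnorm (scv c v) = `|c| * qnorm v.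
Proof.
rewrite /qnorm; under eq_bigr => y _ do rewrite scvE normrM exprMn.
rewrite -mulr_sumr sqrtCM ?sqrCK ?qualifE /= ?exprn_ge0 ?sumr_ge0 // => *.
exact: exprn_ge0.
Qed.

Lemma normalize_scv n c (v : qvec n) : normalize (scv c v) = scv (c / `|c|) (normalize v).
Proof. by rewrite /normalize qnorm_scv !scvA invfM mulrC mulrA. Qed.

Lemma same_stateZr n c (u v : qvec n) :
  `|c| = 1 -> same_state u (scv c v) <-> same_state u v.
Proof.
move=> hc; have c0 : c != 0 by rewrite -normr_eq0 hc oner_eq0.
split=> -[e [he ->]]; first by exists (e * c); rewrite scvA normrM he hc mulr1.
by exists (e / c); rewrite scvA mulfVK // normrM normfV he hc invr1 mulr1.
Qed.

Lemma same_state_normalizeZ n k (g w : qvec n) :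
  k != 0 -> same_state g (normalize (scv k w)) <-> same_state g (normalize w).
Proof.
move=> k0; rewrite normalize_scv same_stateZr // normrM normfV normr_id divff //.
by rewrite normr_eq0.
Qed.

Definition isqrt2 : algC := (sqrtC 2)^-1.

Lemma isqrt2_gt0 : 0 < isqrt2.
Proof. by rewrite invr_gt0 sqrtC_gt0 ltr0n. Qed.

Lemma isqrt2_neq0 : isqrt2 != 0.
Proof. by rewrite gt_eqF // isqrt2_gt0. Qed.

Lemma isqrt2_sqrD : isqrt2 ^+ 2 + isqrt2 ^+ 2 = 1.
Proof. by rewrite exprVn sqrtCK; field. Qed.

Lemma ghzE n (x : bits n) s y :
  ghz x s y = isqrt2 * ((y == x)%:R + s * (y == negb_bits x)%:R).
Proof. by rewrite /ghz /scv /ket !ffunE. Qed.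

Section GHZ.
Variables (n : nat) (x : bits n).

Lemma ghz_out s y : y != x -> y != negb_bits x -> ghz x s y = 0.
Proof. by rewrite ghzE => /negbTE-> /negbTE->; rewrite mulr0 addr0 mulr0. Qed.

Lemma ghz_conj s y : is_sign s -> (ghz x s y)^* = ghz x s y.
Proof.
move=> hs; apply: conj_Creal.
rewrite ghzE rpredM ?rpredD ?rpredM ?rpred_nat ?(sign_real hs) //.
exact: gtr0_real isqrt2_gt0.
Qed.

Lemma ghz_negb s : is_sign s -> ghz (negb_bits x) s = scv s (ghz x s).
Proof.
by move=> hs; apply/ffunP=> y; rewrite ghzE scvE ghzE negb_bitsK; case: hs => ->; ring.
Qed.

Hypothesis hn : (0 < n)%N.

Lemma ghz_self s : ghz x s x = isqrt2.
Proof. by rewrite ghzE eqxx negb_bits_neq // mulr0 addr0 mulr1. Qed.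

Lemma ghz_negb_self s : ghz x s (negb_bits x) = isqrt2 * s.
Proof. by rewrite ghzE eq_sym negb_bits_neq // eqxx add0r mulr1. Qed.

Lemma qnorm_ghz s : is_sign s -> qnorm (ghz x s) = 1.
Proof.
move=> hs; rewrite /qnorm (bigD1 x) // (bigD1 (negb_bits x)) /=; last first.
  by rewrite eq_sym negb_bits_neq.
rewrite big1 => [|y /andP[nxy nnxy]]; last by rewrite ghz_out ?normr0 ?expr0n.
rewrite ghz_self ghz_negb_self normrM (sign_norm hs) mulr1 ger0_norm ?ltW ?isqrt2_gt0 //.
by rewrite addr0 isqrt2_sqrD sqrtC1.
Qed.

Lemma normalize_ghz s : is_sign s -> normalize (ghz x s) = ghz x s.
Proof. by move=> hs; rewrite /normalize qnorm_ghz // invr1 scv1. Qed.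

Lemma ghz_scv_eq s t c : ghz x s = scv c (ghz x t) -> s = t.
Proof.
move/ffunP=> e; have := e (negb_bits x); have := e x.
rewrite !(scvE c) !ghz_self !ghz_negb_self -{1}[isqrt2]mul1r => /(mulIf isqrt2_neq0) <-.
by rewrite mul1r => /(mulfI isqrt2_neq0).
Qed.

End GHZ.

Lemma same_state_ghz n (hn : (0 < n)%N) (x q : bits n) s t :
  is_sign s -> is_sign t ->
  same_state (ghz x s) (ghz q t) <-> ((x == q) || (x == negb_bits q)) /\ s = t.
Proof.
move=> hs ht; split=> [[c [_ e]]|[/orP[]/eqP-> <-]].
- have [exq|nxq] := eqVneq x q; first by rewrite exq in e *; rewrite (ghz_scv_eq hn e).
  have [exq|nxnq] := eqVneq x (negb_bits q).
    rewrite -[q]negb_bitsK -exq ghz_negb // scvA in e.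
    by rewrite orbT (ghz_scv_eq hn e).
  move/ffunP/(_ x): e; rewrite (scvE c) ghz_self // ghz_out // mulr0 => /eqP.
  by rewrite (negbTE isqrt2_neq0).
- by exists 1; rewrite normr1 scv1.
- by exists s; rewrite ghz_negb // (sign_norm hs).
Qed.

Lemma sum_delta n (x : bits n) (F : bits n -> algC) : \sum_z (z == x)%:R * F z = F x.
Proof. by rewrite (bigD1 x) //= eqxx mul1r big1 ?addr0 // => z /negbTE->; rewrite mul0r. Qed.

Lemma eq_collapse p q (psi phi : bits p -> bits q -> algC) (a : qvec p) :
  (forall x y, psi x y = phi x y) -> collapse psi a = collapse phi a.
Proof. by move=> e; apply/ffunP=> y; rewrite !ffunE; apply: eq_bigr => x _; rewrite e. Qed.

Lemma collapse_ghz p q (psi : bits p -> bits q -> algC) (x : bits p) s : is_sign s ->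
  collapse psi (ghz x s) = [ffun y => isqrt2 * (psi x y + s * psi (negb_bits x) y)].
Proof.
move=> hs; apply/ffunP=> y; rewrite !ffunE.
have e z : isqrt2 * ((z == x)%:R + s * (z == negb_bits x)%:R) * psi z y =
    (z == x)%:R * (isqrt2 * psi z y) + (z == negb_bits x)%:R * (isqrt2 * s * psi z y).
  by ring.
under eq_bigr => z _ do rewrite ghz_conj // ghzE e.
by rewrite big_split /= !sum_delta mulrDr mulrA.
Qed.

Definition pair_amp m n (G : qvec (m + m)) (H : qvec (n + n)) (x y : bits (m + n)) : algC :=
  G (join (lbits x) (lbits y)) * H (join (rbits x) (rbits y)).

Lemma collapse_pair_ampZl m n k (G : qvec (m + m)) (H : qvec (n + n)) g :
  collapse (pair_amp (scv k G) H) g = scv k (collapse (pair_amp G H) g).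
Proof.
apply/ffunP=> y; rewrite scvE !ffunE mulr_sumr.
by apply: eq_bigr => x _; rewrite /pair_amp scvE; ring.
Qed.

Lemma collapse_pair_ampZr m n k (G : qvec (m + m)) (H : qvec (n + n)) g :
  collapse (pair_amp G (scv k H)) g = scv k (collapse (pair_amp G H) g).
Proof.
apply/ffunP=> y; rewrite scvE !ffunE mulr_sumr.
by apply: eq_bigr => x _; rewrite /pair_amp scvE; ring.
Qed.

Lemma ghz_join m n (a c : bits m) (b p : bits n) s :
  ghz (join a b) s (join c p) =
  isqrt2 * ((c == a)%:R * (p == b)%:R + s * ((c == negb_bits a)%:R * (p == negb_bits b)%:R)).
Proof. by rewrite ghzE negb_join !join_eq -!mulnb !natrM. Qed.

Lemma ghz_join_swap m n (u p : bits m) (v q : bits n) s :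
  ghz (join u v) s (join p q) = ghz (join v u) s (join q p).
Proof.
by rewrite !ghz_join [(q == v)%:R * _]mulrC [(q == negb_bits v)%:R * _]mulrC.
Qed.

Lemma ghz_join_negb m n (a c : bits m) (b : bits n) s : is_sign s -> c = negb_bits a ->
  ghz (join a b) s = scv s (ghz (join c (negb_bits b)) s).
Proof. by move=> hs ->; rewrite -ghz_negb // negb_join !negb_bitsK. Qed.

Lemma joint_amp_parts13 m n (G : qvec (m + m)) (H : qvec (n + n)) x y :
  joint_amp G H true x y = pair_amp G H x y.
Proof. by rewrite /joint_amp /tensor ffunE !lbits_join !rbits_join. Qed.

Lemma joint_amp_parts14 m n (G : qvec (m + m)) (u v : bits n) s x y :
  joint_amp G (ghz (join u v) s) false x y = pair_amp G (ghz (join v u) s) x y.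
Proof. by rewrite /joint_amp /tensor ffunE !lbits_join !rbits_join ghz_join_swap. Qed.

Definition aligned m n (a b : bits m) (u v : bits n) : bool :=
  (a == b) && (u == v) || (a == negb_bits b) && (u == negb_bits v).

Section Aligned.
Variables (m n : nat) (a b : bits m) (u v : bits n).

Lemma alignedP :
  reflect ((a = b /\ u = v) \/ (a = negb_bits b /\ u = negb_bits v)) (aligned a b u v).
Proof.
apply: (iffP orP) => [[]/andP[/eqP-> /eqP->]|[][-> ->]]; [left|right|left|right] => //.
all: by rewrite !eqxx.
Qed.

Lemma aligned_negbl : aligned (negb_bits a) (negb_bits b) u v = aligned a b u v.
Proof. by rewrite /aligned (inj_eq (@negb_bits_inj _)) negb_bits_eq negb_bitsK. Qed.

Lemma aligned_negbr : aligned a b (negb_bits u) (negb_bits v) = aligned a b u v.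
Proof. by rewrite /aligned (inj_eq (@negb_bits_inj _)) negb_bits_eq negb_bitsK. Qed.

Lemma aligned_swapr : aligned a b v u = aligned a b u v.
Proof. by rewrite /aligned (eq_sym v u) (eq_sym v) negb_bits_eq. Qed.

End Aligned.

Arguments alignedP {m n a b u v}.

Section CollapsePair.
Variables (m n : nat) (s s1 s2 : algC).
Hypotheses (hm : (0 < m)%N) (hn : (0 < n)%N).
Hypotheses (hs : is_sign s) (hs1 : is_sign s1) (hs2 : is_sign s2).

Lemma collapse_pair_ghz_aligned (a b : bits m) (u v : bits n) :
  collapse (pair_amp (ghz (join a b) s1) (ghz (join u v) s2)) (ghz (join a u) s) =
  scv (isqrt2 ^+ 2) (ghz (join b v) (s * s1 * s2)).
Proof.
rewrite collapse_ghz //; apply/ffunP=> y; rewrite ffunE (scvE (isqrt2 ^+ 2)) -[y]joinK.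
rewrite /pair_amp negb_join !lbits_join !rbits_join !ghz_join !negb_bits_eq !negb_bitsK.
by rewrite !eqxx !negb_bits_neq // /=; ring.
Qed.

Lemma collapse_pair_ghz_neq0 (a b c : bits m) (u v d : bits n) :
  collapse (pair_amp (ghz (join a b) s1) (ghz (join u v) s2)) (ghz (join c d) s) != 0 ->
  ((c == a) || (c == negb_bits a)) && ((d == u) || (d == negb_bits u)).
Proof.
apply: contraNT; rewrite negb_and !negb_or => hcd.
apply/eqP/ffunP=> y; rewrite collapse_ghz // ffunE [RHS]ffunE /pair_amp negb_join.
rewrite !lbits_join !rbits_join !ghz_join !negb_bits_eq !negb_bitsK.
by case/orP: hcd => /andP[/negbTE-> /negbTE->] /=; ring.
Qed.

Lemma same_state_collapse_pair_ghz (a b c : bits m) (u v d : bits n) :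
  let w := collapse (pair_amp (ghz (join a b) s1) (ghz (join u v) s2)) (ghz (join c d) s) in
  w != 0 -> same_state (ghz (join c d) s) (normalize w) <-> aligned a b u v /\ s1 = s2.
Proof.
move=> w hw; have /andP[hc hd] := collapse_pair_ghz_neq0 hw; rewrite {}/w in hw *.
wlog /eqP ca : a b hw hc / c == a => [hwlog|].
  case/orP: (hc) => [|/eqP ca]; first exact: hwlog.
  rewrite (ghz_join_negb _ hs1 ca) collapse_pair_ampZl in hw *.
  rewrite same_state_normalizeZ ?sign_neq0 // -aligned_negbl -ca.
  apply: hwlog; rewrite ?eqxx //.
  by apply: contraNneq hw => ->; rewrite scvr0.
wlog /eqP du : u v hw hd / d == u => [hwlog|].
  case/orP: (hd) => [|/eqP du]; first exact: hwlog.
  rewrite (ghz_join_negb _ hs2 du) collapse_pair_ampZr in hw *.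
  rewrite same_state_normalizeZ ?sign_neq0 // -aligned_negbr -du.
  apply: hwlog; rewrite ?eqxx //.
  by apply: contraNneq hw => ->; rewrite scvr0.
move=> {hc hd}; subst c d.
have hmn : (0 < m + n)%N by rewrite addn_gt0 hm.
have ht := sign_mul (sign_mul hs hs1) hs2.
rewrite collapse_pair_ghz_aligned same_state_normalizeZ ?expf_neq0 ?isqrt2_neq0 //.
rewrite normalize_ghz // same_state_ghz // negb_join !join_eq.
by split=> -[al e]; split=> //; apply/(sign_eq_mulr2 _ hs hs2).
Qed.

End CollapsePair.

Theorem theorem1 (m1 m2 : nat) (hm1 : (0 < m1)%N) (hm2 : (0 < m2)%N)
  (i1 : bits (m1 + m1)) (i2 : bits (m2 + m2)) (s1 s2 : algC)
  (hi1 : first0 i1) (hi2 : first0 i2)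
  (hs1 : s1 = 1 \/ s1 = -1) (hs2 : s2 = 1 \/ s2 = -1)
  (parts13 : bool) (Ga : qvec (m1 + m2))
  (hGa : in_ghz_basis Ga)
  (hocc : collapse (joint_amp (ghz i1 s1) (ghz i2 s2) parts13) Ga != 0) :
  same_state Ga (normalize (collapse (joint_amp (ghz i1 s1) (ghz i2 s2) parts13) Ga))
  <->
  (((lbits i1 = rbits i1 /\ lbits i2 = rbits i2) \/
    (lbits i1 = negb_bits (rbits i1) /\ lbits i2 = negb_bits (rbits i2)))
   /\ s1 = s2).
Proof.
case: hGa hocc => x [s [_ [hs ->]]].
have e1 : ghz i1 s1 = ghz (join (lbits i1) (rbits i1)) s1 by rewrite joinK.
have e2 : ghz i2 s2 = ghz (join (lbits i2) (rbits i2)) s2 by rewrite joinK.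
rewrite -(joinK x) e1 e2; case: parts13 => hw.
- rewrite (eq_collapse _ (joint_amp_parts13 _ _)) in hw *.
  by rewrite (same_state_collapse_pair_ghz hm1 hm2 hs hs1 hs2 hw) (rwP alignedP).
- rewrite (eq_collapse _ (joint_amp_parts14 _ _ _ _)) in hw *.
  rewrite (same_state_collapse_pair_ghz hm1 hm2 hs hs1 hs2 hw).
  by rewrite aligned_swapr (rwP alignedP).
Qed.
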